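(* Let $\Gamma$ be a connected amply regular graph with diameter $d\ge 4$ and parameters $(v,k,\lambda,\mu)$, where $\mu=\frac{k-1}{2}$ and $k\ge5$ is odd. Then $\lambda=0$ and $d\le 5$.
   Context: An amply regular graph with parameters $(v,k,\lambda,\mu)$ is a $k$-regular graph on $v$ vertices in which any two adjacent vertices have exactly $\lambda$ common neighbours and any two vertices at distance $2$ have exactly $\mu$ common neighbours. *)

From mathcomp Require Import all_boot.
Set Implicit Arguments. Unset Strict Implicit. Unset Printing Implicit Defensive.

Definition simple_graph (T : finType) (e : rel T) : Prop :=
  symmetric e /\ irreflexive e.

Definition nbhd (T : finType) (e : rel T) (x : T) : {set T} := [set y | e x y].

Fixpoint ball (T : finType) (e : rel T) (x : T) (n : nat) : {set T} :=
  match n with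
  | 0 => [set x]
  | n'.+1 => ball e x n' :|: \bigcup_(z in ball e x n') nbhd e z
  end.

Definition connected_graph (T : finType) (e : rel T) : Prop :=
  forall x y : T, connect e x y.

(* graph distance: least n with y in ball x n (equals #|T| if unreachable) *)
Definition gdist (T : finType) (e : rel T) (x y : T) : nat :=
  find (fun n => y \in ball e x n) (iota 0 #|T|).

Definition diameter (T : finType) (e : rel T) : nat :=
  \max_(p : T * T) gdist e p.1 p.2.

Definition amply_regular (T : finType) (e : rel T) (v k lam mu : nat) : Prop :=
  [/\ #|T| = v,
      forall x, #|nbhd e x| = k,
      forall x y, e x y -> #|nbhd e x :&: nbhd e y| = lam &
      forall x y, gdist e x y = 2 -> #|nbhd e x :&: nbhd e y| = mu].

From mathcomp Require Import all_boot.
From mathcomp Require Import zify.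
Set Implicit Arguments. Unset Strict Implicit. Unset Printing Implicit Defensive.

(* Write k = 2 mu + 1.  Counting the paths of length two from a vertex gives
   mu * #|sphere z 2| = k (k - lam - 1), and as (2 mu + 1)(2 mu - lam) = - lam
   modulo mu, mu divides lam.  Let z be the midpoint of two vertices x, u at
   distance 4 and w a common neighbour of z and u.  Then w, the mu common
   neighbours of z and x, and the lam common neighbours of z and w are
   distinct neighbours of z, so lam <= mu; if lam = mu they exhaust N(z), and
   a neighbour c of z adjacent to neither x nor u (one exists by counting)
   would then be adjacent to all 2 mu vertices of N(z) in N(x) or N(u).  Hence
   lam < mu, so lam = 0.
   With lam = 0, a vertex z at distance 3 from x has more than mu neighbours
   at distance 2 from x: otherwise these would be exactly the common
   neighbours of z with every neighbour of x at distance 2 from z, and two of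
   them, w and w', would have z and the mu vertices of N(w) in N(x) as common
   neighbours.  So if the diameter were at least 6, the midpoint z of two
   vertices at distance 6 would have more than 2 mu + 1 = k neighbours. *)

Lemma leqif_card_disjoint_cover (T : finType) (A B C : {set T}) :
  [disjoint A & B] -> A :|: B \subset C -> #|A| + #|B| <= #|C| ?= iff (C \subset A :|: B).
Proof.
move=> disAB sABC; have := (leq_card_setU A B).2; rewrite disAB => /eqP <-.
exact: subset_leqif_card.
Qed.

Lemma dvdn_odd_double_sub mu lam :
  lam <= mu.*2 -> mu %| mu.*2.+1 * (mu.*2 - lam) -> mu %| lam.
Proof.
have mu_dvd2 : mu %| mu.*2 by rewrite -mul2n dvdn_mull.
move=> le_lam; rewrite mulSn dvdn_addl ?dvdn_mulr // => dvd_sub.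
by rewrite -(subKn le_lam) dvdn_sub.
Qed.

Section Graph.

Variables (T : finType) (e : rel T).
Hypotheses (e_sym : symmetric e) (e_irr : irreflexive e) (e_conn : connected_graph e).

Definition sphere (x : T) (n : nat) : {set T} := [set y | gdist e x y == n].

Lemma in_sphere x n y : (y \in sphere x n) = (gdist e x y == n).
Proof. by rewrite inE. Qed.

Lemma ball0 x y : (y \in ball e x 0) = (y == x).
Proof. by rewrite inE. Qed.

Lemma ballS x n y :
  (y \in ball e x n.+1) = (y \in ball e x n) || [exists z, (z \in ball e x n) && e z y].
Proof.
rewrite /= in_setU; congr orb; apply/bigcupP/existsP => [[z zn]|[z /andP[zn ezy]]].
  by rewrite inE => ezy; exists z; rewrite zn ezy.
by exists z; rewrite ?inE.
Qed.

Lemma ball1 x y : (y \in ball e x 1) = (y == x) || e x y.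
Proof.
rewrite ballS ball0; congr orb.
apply/existsP/idP => [[z /andP[]]|exy]; first by rewrite ball0 => /eqP ->.
by exists x; rewrite ball0 eqxx.
Qed.

Lemma sub_ball x m n : m <= n -> {subset ball e x m <= ball e x n}.
Proof.
move=> le_mn; rewrite -(subnK le_mn); elim: (n - m) => // j IHj y /IHj.
by rewrite addSn ballS => ->.
Qed.

Lemma ball_trans x y z m n :
  y \in ball e x m -> z \in ball e y n -> z \in ball e x (m + n).
Proof.
move=> yxm; elim: n z => [|n IHn] z; first by rewrite ball0 addn0 => /eqP ->.
rewrite ballS addnS ballS => /orP[/IHn -> //|/existsP[w /andP[/IHn wxmn ewz]]].
by apply/orP; right; apply/existsP; exists w; rewrite wxmn.
Qed.

Lemma ball_sym x y n : y \in ball e x n -> x \in ball e y n.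
Proof.
elim: n x y => [|n IHn] x y; first by rewrite !ball0 eq_sym.
rewrite ballS => /orP[/IHn /(sub_ball (leqnSn n)) //|/existsP[w /andP[/IHn wy ewy]]].
by rewrite -add1n; apply: ball_trans wy; rewrite ball1 e_sym ewy orbT.
Qed.

Lemma last_path_ball x p : path e x p -> last x p \in ball e x (size p).
Proof.
elim: p x => [|y p IHp] x; first by rewrite ball0.
rewrite [path _ _ _]/= -[size _]/(1 + size p) => /andP[exy /IHp].
by apply: ball_trans; rewrite ball1 exy orbT.
Qed.

Lemma connected_ball x y : exists2 n, n < #|T| & y \in ball e x n.
Proof.
have /connectP[p /shortenP[p' p'_path p'_uniq _] ->] := e_conn x y.
exists (size p'); last exact: last_path_ball.
by rewrite -ltnS -[(size p').+1]/(size (x :: p')) -(card_uniqP p'_uniq) ltnS max_card.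
Qed.

Lemma mem_ball_gdist x y m : (y \in ball e x m) = (gdist e x y <= m).
Proof.
have [n n_lt y_n] := connected_ball x y.
have has_y : has (fun n => y \in ball e x n) (iota 0 #|T|).
  by apply/hasP; exists n; rewrite ?mem_iota.
have gdist_lt : gdist e x y < #|T|.
  by rewrite /gdist -[X in _ < X](size_iota 0) -has_find.
have y_gdist : y \in ball e x (gdist e x y).
  by have := nth_find 0 has_y; rewrite nth_iota.
apply/idP/idP => [y_m|]; last by move/sub_ball; apply.
rewrite leqNgt; apply/negP => lt_m.
have := before_find 0 lt_m; rewrite nth_iota ?(ltn_trans lt_m) //= => y_notm.
by rewrite y_m in y_notm.
Qed.

Lemma gdist_le_path x p : path e x p -> gdist e x (last x p) <= size p.
Proof. by move/last_path_ball; rewrite mem_ball_gdist. Qed.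

Lemma gdist_eq0 x y : (gdist e x y == 0) = (y == x).
Proof. by rewrite -leqn0 -mem_ball_gdist ball0. Qed.

Lemma gdistxx x : gdist e x x = 0.
Proof. by apply/eqP; rewrite gdist_eq0. Qed.

Lemma gdistC x y : gdist e x y = gdist e y x.
Proof.
by apply/eqP; rewrite eqn_leq -!mem_ball_gdist; apply/andP; split; apply: ball_sym;
  rewrite mem_ball_gdist.
Qed.

Lemma gdist_triangle x y z : gdist e x z <= gdist e x y + gdist e y z.
Proof. by rewrite -mem_ball_gdist; apply: (@ball_trans _ y); rewrite mem_ball_gdist. Qed.

Lemma gdist_eq1 x y : (gdist e x y == 1) = e x y.
Proof.
apply/idP/idP => [d1|exy].
  have : y \in ball e x 1 by rewrite mem_ball_gdist (eqP d1).
  by rewrite ball1 => /orP[/eqP yx|//]; rewrite yx gdistxx in d1.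
rewrite eqn_leq -mem_ball_gdist ball1 exy orbT lt0n gdist_eq0.
by apply: contraTneq exy => ->; rewrite e_irr.
Qed.

Lemma gdist_adj x y z : e y z -> gdist e x z <= (gdist e x y).+1.
Proof. by move=> eyz; rewrite -addn1 -(eqP (_ : gdist e y z == 1)) ?gdist_triangle ?gdist_eq1. Qed.

Lemma gdist_pred x y n : gdist e x y = n.+1 -> exists z, gdist e x z = n /\ e z y.
Proof.
move=> dxy; have : y \in ball e x n.+1 by rewrite mem_ball_gdist dxy.
rewrite ballS mem_ball_gdist dxy ltnn => /existsP[z /andP[]].
rewrite mem_ball_gdist => dxz ezy; exists z; split=> //.
by have := gdist_adj x ezy; rewrite dxy; lia.
Qed.

Lemma gdist_split x y m n :
  gdist e x y = m + n -> exists z, gdist e x z = m /\ gdist e z y = n.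
Proof.
elim: n y => [|n IHn] y dxy; first by exists y; rewrite dxy addn0 gdistxx.
rewrite addnS in dxy; have [y' [dxy' ey'y]] := gdist_pred dxy.
have [z [dxz dzy']] := IHn _ dxy'; exists z; split=> //.
by have := gdist_adj z ey'y; have := gdist_triangle x z y; rewrite dxz dzy' dxy; lia.
Qed.

Lemma gdist2_path x y z : e x y -> e y z -> (gdist e x z == 2) = (z != x) && ~~ e x z.
Proof.
move=> exy eyz; have := gdist_adj x eyz; rewrite (eqP (_ : gdist e x y == 1)) ?gdist_eq1 //.
by rewrite -gdist_eq0 -gdist_eq1; case: (gdist e x z) => [|[|[|]]].
Qed.

Lemma sphere_disjoint x y m n : m + n < gdist e x y -> [disjoint sphere x m & sphere y n].
Proof.
move=> lt_mn; apply/pred0P => v /=; rewrite !in_sphere; apply/negP => /andP[/eqP dxv /eqP dyv].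
by have := gdist_triangle x v y; rewrite dxv (gdistC v) dyv; lia.
Qed.

Lemma exists_gdist_diameter : 0 < diameter e -> exists x y, gdist e x y = diameter e.
Proof.
rewrite /diameter; case: (pickP (@predT (T * T))) => [p _ _|none]; last by rewrite big_pred0.
have TT_gt0 : 0 < #|{: T * T}| by apply/card_gt0P; exists p.
by have [[x y] ->] := eq_bigmax (fun p : T * T => gdist e p.1 p.2) TT_gt0; exists x, y.
Qed.

Lemma exists_midpoint n : 0 < n -> n.*2 <= diameter e ->
  exists x y z, [/\ gdist e x y = n.*2, gdist e x z = n & gdist e z y = n].
Proof.
move=> n_gt0 le_diam; have [x0 [y0 dxy0]] : exists x y, gdist e x y = diameter e.
  by apply: exists_gdist_diameter; lia.
have [y [dxy _]] : exists y, gdist e x0 y = n.*2 /\ gdist e y y0 = diameter e - n.*2.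
  by apply: gdist_split; lia.
have [z [dxz dzy]] : exists z, gdist e x0 z = n /\ gdist e z y = n.
  by apply: gdist_split; lia.
by exists x0, y, z.
Qed.

Variables k lam mu : nat.
Hypothesis card_nbhd : forall x, #|nbhd e x| = k.
Hypothesis card_nbhdI_adj : forall x y, e x y -> #|nbhd e x :&: nbhd e y| = lam.
Hypothesis card_nbhdI_dist2 : forall x y, gdist e x y = 2 -> #|nbhd e x :&: nbhd e y| = mu.

Lemma card_nbhdI x (B : {set T}) : #|nbhd e x :&: B| = \sum_(b in B) e x b.
Proof.
rewrite -sum1_card [LHS]big_mkcond [RHS]big_mkcond; apply: eq_bigr => b _.
by rewrite !inE andbC; case: (b \in B); case: (e x b).
Qed.

Lemma sum_card_nbhdI (A B : {set T}) :
  \sum_(a in A) #|nbhd e a :&: B| = \sum_(b in B) #|nbhd e b :&: A|.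
Proof.
under eq_bigr do rewrite card_nbhdI; under [RHS]eq_bigr do rewrite card_nbhdI.
by rewrite exchange_big; apply: eq_bigr => b _; apply: eq_bigr => a _; rewrite e_sym.
Qed.

Lemma card_nbhdI_sphere2 z a : e z a -> #|nbhd e a :&: sphere z 2| = k - lam - 1.
Proof.
move=> eza; have eaz : e a z by rewrite e_sym.
have -> : nbhd e a :&: sphere z 2 = (nbhd e a :\: nbhd e z) :\ z.
  apply/setP => b; rewrite !inE; case eab: (e a b); last by rewrite !andbF.
  by rewrite (gdist2_path eza eab) andbT.
have z_in : z \in nbhd e a :\: nbhd e z by rewrite !inE e_irr eaz.
by have := cardsD1 z (nbhd e a :\: nbhd e z); rewrite z_in cardsD card_nbhd card_nbhdI_adj //; lia.
Qed.

Lemma mu_card_sphere2 z : mu * #|sphere z 2| = k * (k - lam - 1).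
Proof.
transitivity (\sum_(b in sphere z 2) #|nbhd e b :&: nbhd e z|).
  rewrite mulnC -sum_nat_const; apply: eq_bigr => b.
  by rewrite in_sphere gdistC => /eqP/card_nbhdI_dist2.
rewrite -sum_card_nbhdI (eq_bigr (fun=> k - lam - 1)) => [|a].
  by rewrite sum_nat_const card_nbhd.
by rewrite inE => /card_nbhdI_sphere2.
Qed.

Hypothesis k_eq : k = mu.*2.+1.

Lemma leqif_nbhd_mid_cover x u z w :
  gdist e x u = 4 -> gdist e x z = 2 -> e z w -> e w u ->
  mu.+1 + lam <= k
    ?= iff (nbhd e z \subset (w |: (nbhd e z :&: nbhd e x)) :|: (nbhd e z :&: nbhd e w)).
Proof.
move=> dxu dxz ezw ewu.
have nexw : ~~ e x w.
  by apply/negP => exw; have := @gdist_le_path x [:: w; u]; rewrite /= exw ewu dxu => /(_ isT).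
have card_X : #|w |: (nbhd e z :&: nbhd e x)| = mu.+1.
  by rewrite cardsU1 !inE (negbTE nexw) andbF card_nbhdI_dist2 // gdistC.
rewrite -card_X -(card_nbhdI_adj ezw) -(card_nbhd z); apply: leqif_card_disjoint_cover.
  apply/pred0P => v /=; rewrite !inE; apply/negP.
  case/andP=> /orP[/eqP->|/andP[_ exv]] /andP[_ ewv]; first by rewrite e_irr in ewv.
  have evw : e v w by rewrite e_sym.
  by have := @gdist_le_path x [:: v; w; u]; rewrite /= exv evw ewu dxu => /(_ isT).
by apply/subsetP => v; rewrite !inE => /orP[/orP[/eqP->|/andP[]]|/andP[]].
Qed.

Lemma adj_of_lam_eq_mu x u z w c : lam = mu ->
  gdist e x u = 4 -> gdist e x z = 2 -> e z w -> e w u ->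
  e z c -> ~~ e x c -> ~~ e u c -> e w c.
Proof.
move=> lam_mu dxu dxz ezw ewu ezc nexc neuc.
have cover := (leqif_nbhd_mid_cover dxu dxz ezw ewu).2.
have /subsetP/(_ c) : nbhd e z \subset (w |: (nbhd e z :&: nbhd e x)) :|: (nbhd e z :&: nbhd e w).
  by rewrite -cover lam_mu k_eq; apply/eqP; lia.
rewrite !inE ezc (negbTE nexc) /= => /(_ isT) /orP[/orP[/eqP cw|//]|//].
by rewrite cw e_sym ewu in neuc.
Qed.

Hypothesis mu_gt1 : 1 < mu.

Lemma lam_lt_mu x u z : gdist e x u = 4 -> gdist e x z = 2 -> gdist e z u = 2 -> lam < mu.
Proof.
move=> dxu dxz dzu; have dux : gdist e u x = 4 by rewrite gdistC.
have duz : gdist e u z = 2 by rewrite gdistC.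
have [w [dzw ewu]] := gdist_pred dzu; have ezw : e z w by rewrite -gdist_eq1 dzw.
have lam_le : lam <= mu by have := (leqif_nbhd_mid_cover dxu dxz ezw ewu).1; rewrite k_eq; lia.
rewrite ltn_neqAle lam_le andbT; apply/eqP => lam_mu.
set Ax := nbhd e z :&: nbhd e x; set Au := nbhd e z :&: nbhd e u.
have disA : [disjoint Ax & Au].
  apply/pred0P => v /=; rewrite !inE; apply/negP => /andP[/andP[_ exv] /andP[_ euv]].
  have evu : e v u by rewrite e_sym.
  by have := @gdist_le_path x [:: v; u]; rewrite /= exv evu dxu => /(_ isT).
have sub_z : Ax :|: Au \subset nbhd e z by rewrite subUset !subsetIl.
have card_Ax : #|Ax| = mu by rewrite card_nbhdI_dist2 // gdistC.
have card_Au : #|Au| = mu by rewrite card_nbhdI_dist2.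
have [c ezc] : exists2 c, e z c & c \notin Ax :|: Au.
  have /subsetPn[c] : ~~ (nbhd e z \subset Ax :|: Au).
    by rewrite -(leqif_card_disjoint_cover disA sub_z).2 card_Ax card_Au card_nbhd k_eq; lia.
  by rewrite inE; exists c.
rewrite !inE ezc /= negb_or => /andP[nexc neuc].
have sub_c : Ax :|: Au \subset nbhd e c :&: nbhd e z.
  apply/subsetP => v; rewrite !inE => /orP[/andP[ezv exv]|/andP[ezv euv]];
    rewrite ezv andbT e_sym.
    by apply: (adj_of_lam_eq_mu lam_mu dux duz ezv); rewrite // e_sym.
  by apply: (adj_of_lam_eq_mu lam_mu dxu dxz ezv); rewrite // e_sym.
have ecz : e c z by rewrite e_sym.
have := (leqif_card_disjoint_cover disA sub_c).1.
by rewrite card_Ax card_Au card_nbhdI_adj // lam_mu; lia.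
Qed.

Lemma lam_eq0 : 4 <= diameter e -> lam = 0.
Proof.
move=> diam_ge4; have [x [u [z [dxu dxz dzu]]]] := exists_midpoint (n := 2) isT diam_ge4.
have lam_lt := lam_lt_mu dxu dxz dzu.
have : mu %| lam.
  apply: dvdn_odd_double_sub; first lia.
  have -> : mu.*2 - lam = k - lam - 1 by lia.
  by rewrite -k_eq -(mu_card_sphere2 z) dvdn_mulr.
by case: lam lam_lt => // l lt_mu /(dvdn_leq (ltn0Sn l)); lia.
Qed.

Lemma nbhdI_eq_of_card_le x y z :
  gdist e x z = 3 -> #|nbhd e z :&: sphere x 2| <= mu -> e x y -> gdist e y z = 2 ->
  nbhd e y :&: nbhd e z = nbhd e z :&: sphere x 2.
Proof.
move=> dxz card_le exy dyz; apply/eqP; rewrite eqEcard card_nbhdI_dist2 // card_le andbT.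
apply/subsetP => v; rewrite !inE => /andP[eyv ezv]; rewrite ezv /=.
have evz : e v z by rewrite e_sym.
have := gdist_adj x exy; have := gdist_adj x eyv; have := gdist_adj x evz.
by rewrite gdistxx dxz; lia.
Qed.

Lemma mu_lt_card_nbhdI_sphere2 x z :
  lam = 0 -> gdist e x z = 3 -> mu < #|nbhd e z :&: sphere x 2|.
Proof.
move=> lam0 dxz; rewrite ltnNge; apply/negP => card_le.
set C := nbhd e z :&: sphere x 2.
have [w [dxw ewz]] := gdist_pred dxz; have ezw : e z w by rewrite e_sym.
have dist2 y : e x y -> e y w -> gdist e y z = 2.
  move=> exy eyw; have := gdist_triangle x y z; have := gdist_adj x exy.
  by have := gdist_adj y eyw; have := gdist_adj y ewz; rewrite !gdistxx dxz; lia.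
have C_eq y : e x y -> e y w -> nbhd e y :&: nbhd e z = C.
  by move=> exy eyw; exact: nbhdI_eq_of_card_le dxz card_le exy (dist2 y exy eyw).
have [y [dxy eyw]] := gdist_pred dxw; have exy : e x y by rewrite -gdist_eq1 dxy.
have card_C : #|C| = mu by rewrite -(C_eq y) ?card_nbhdI_dist2 ?dist2.
have w_C : w \in C by rewrite !inE ezw dxw.
have /card_gt0P[w'] : 0 < #|C :\ w| by have := cardsD1 w C; rewrite w_C card_C; lia.
rewrite !inE => /and3P[w'_neq ezw' dxw'].
have new' : ~~ e w w'.
  apply/negP => eww'; have /eqP := card_nbhdI_adj ezw; rewrite lam0 cards_eq0.
  by move=> /eqP/setP/(_ w'); rewrite !inE ezw' eww'.
have dww' : gdist e w w' = 2 by apply/eqP; rewrite (gdist2_path ewz ezw') w'_neq.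
have sub : z |: (nbhd e w :&: nbhd e x) \subset nbhd e w :&: nbhd e w'.
  apply/subsetP => v; rewrite !inE => /orP[/eqP->|/andP[ewv exv]]; first by rewrite ewz e_sym.
  have evw : e v w by rewrite e_sym.
  have /subsetP/(_ w') : C \subset nbhd e v by rewrite -(C_eq v) ?subsetIl.
  by rewrite ewv e_sym !inE ezw' dxw' => ->.
have nexz : ~~ e x z by rewrite -gdist_eq1 dxz.
have dwx : gdist e w x = 2 by rewrite gdistC.
have := subset_leq_card sub; rewrite cardsU1 !inE (negbTE nexz) andbF.
by rewrite !card_nbhdI_dist2 //= add1n ltnn.
Qed.

Lemma diameter_le5 : 4 <= diameter e -> diameter e <= 5.
Proof.
move=> diam_ge4; rewrite leqNgt; apply/negP => diam_ge6.
have [x [u [z [dxu dxz dzu]]]] := exists_midpoint (n := 3) isT diam_ge6.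
have lam0 := lam_eq0 diam_ge4.
have lt_x := mu_lt_card_nbhdI_sphere2 lam0 dxz.
have lt_u := mu_lt_card_nbhdI_sphere2 lam0 (etrans (gdistC u z) dzu).
have dis : [disjoint nbhd e z :&: sphere x 2 & nbhd e z :&: sphere u 2].
  apply: disjointWl (subsetIr _ _) (disjointWr (subsetIr _ _) (sphere_disjoint _)).
  by rewrite dxu.
have sub : (nbhd e z :&: sphere x 2) :|: (nbhd e z :&: sphere u 2) \subset nbhd e z.
  by rewrite subUset !subsetIl.
by have := (leqif_card_disjoint_cover dis sub).1; rewrite card_nbhd k_eq; lia.
Qed.

End Graph.

Theorem lemma3p3 (T : finType) (e : rel T) (v k lam mu d : nat) :
  simple_graph e -> connected_graph e -> amply_regular e v k lam mu ->
  diameter e = d -> 4 <= d ->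
  odd k -> 5 <= k -> mu.*2 = k - 1 ->
  lam = 0 /\ d <= 5.
Proof.
move=> [e_sym e_irr] e_conn [_ card_nbhd card_nbhdI_adj card_nbhdI_dist2] <- diam_ge4.
(* [odd k] is redundant: it follows from [mu.*2 = k - 1] and [5 <= k]. *)
move=> _ k_ge5 mu2; have k_eq : k = mu.*2.+1 by lia.
have mu_gt1 : 1 < mu by lia.
split; first exact: (lam_eq0 e_sym e_irr e_conn card_nbhd card_nbhdI_adj card_nbhdI_dist2).
exact: (diameter_le5 e_sym e_irr e_conn card_nbhd card_nbhdI_adj card_nbhdI_dist2).
Qed.
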